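(* Let $\mathcal{S}=\{S(t,s):t\ge s\}$ and $\mathcal{T}=\{T(t,s):t\ge s\}$ be continuous linear evolution processes in a Banach space $X$ admitting nonuniform exponential dichotomies with projections $\{Q^{\mathcal{S}}(t)\}$ and $\{Q^{\mathcal{T}}(t)\}$, exponents $\alpha_{\mathcal{S}}$ and $\alpha_{\mathcal{T}}$, and the same bound $K(t)\le De^{\nu|t|}$. If $\nu<\min\{\alpha_{\mathcal{T}},\alpha_{\mathcal{S}}\}$ and $$\sup_{0\le t-s\le1}\{K(t)\|T(t,s)-S(t,s)\|_{\mathcal{L}(X)}\}\le\epsilon,$$ then $$\sup_{t\in\mathbb{R}}\{K(t)^{-1}\|Q^{\mathcal{T}}(t)-Q^{\mathcal{S}}(t)\|_{\mathcal{L}(X)}\}\le\frac{e^{-\alpha_{\mathcal{S}}}+e^{-\alpha_{\mathcal{T}}}}{1-e^{-(\alpha_{\mathcal{S}}+\alpha_{\mathcal{T}})}}\,\epsilon.$$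
   Context: A continuous evolution process in a Banach space $X$ is a family $\{S(t,s): t\ge s\}$ of continuous maps $X\to X$ with $S(t,t)=Id_X$, $S(t,s)S(s,\tau)=S(t,\tau)$ for $t\ge s\ge\tau$, and $(t,s,x)\mapsto S(t,s)x$ continuous on $\{t\ge s\}\times X$; it is linear if each $S(t,s)\in\mathcal{L}(X)$. A linear evolution process admits a nonuniform exponential dichotomy if there is a family of bounded projections $\{Q(t)\}_{t\in\mathbb{R}}$ with: (i) $Q(t)S(t,s)=S(t,s)Q(s)$ for $t\ge s$; (ii) $S(t,s)|_{R(Q(s))}:R(Q(s))\to R(Q(t))$ is an isomorphism for $t\ge s$, with inverse denoted $S(s,t)$; (iii) there are a continuous $K:\mathbb{R}\to[1,\infty)$ (bound) with $K(s)\le De^{\nu|s|}$ for constants $D\ge1$, $\nu\ge0$, and $\alpha>0$ (exponent) with $\|S(t,s)(Id_X-Q(s))\|\le K(s)e^{-\alpha(t-s)}$ for $t\ge s$ and $\|S(t,s)Q(s)\|\le K(s)e^{\alpha(t-s)}$ for $t<s$. *)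

From HB Require Import structures.
From mathcomp Require Import all_boot all_order all_algebra.
From mathcomp Require Import all_classical all_reals all_analysis.
Set Implicit Arguments. Unset Strict Implicit. Unset Printing Implicit Defensive.
Import Order.TTheory GRing.Theory Num.Theory.
Import numFieldNormedType.Exports.
Local Open Scope classical_set_scope.
Local Open Scope ring_scope.

Section Defs.
Variables (R : realType) (X : completeNormedModType R).

Definition opnorm_le (A : X -> X) (c : R) : Prop :=
  forall x : X, `|A x| <= c * `|x|.

(* A continuous evolution process {S(t,s) : t >= s}; S is given on all of
   R x R but only its values for s <= t matter. *)
Definition evolution_process (S : R -> R -> X -> X) : Prop :=
  [/\ (forall t : R, S t t = id),
      (forall t s tau : R, tau <= s -> s <= t -> S t s \o S s tau = S t tau) &
      (forall p : R * R * X, p.1.2 <= p.1.1 ->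
         {for p, {within [set q : R * R * X | q.1.2 <= q.1.1],
            continuous (fun q : R * R * X => S q.1.1 q.1.2 q.2)}})].

Definition linear_evolution_process (S : R -> R -> X -> X) : Prop :=
  evolution_process S /\
  (forall t s : R, s <= t ->
     forall (a : R) (x y : X), S t s (a *: x + y) = a *: S t s x + S t s y).

Definition nonuniform_exp_dichotomy (S : R -> R -> X -> X) (Q : R -> X -> X)
    (K : R -> R) (D nu alpha : R) : Prop :=
  [/\
      (forall t : R, (forall (a : R) (x y : X), Q t (a *: x + y) = a *: Q t x + Q t y)
          /\ continuous (Q t) /\ (forall x, Q t (Q t x) = Q t x)),
      (forall t s : R, s <= t -> forall x, Q t (S t s x) = S t s (Q s x)),
      (forall t s : R, s <= t ->
         {in range (Q s) &, injective (S t s)} /\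
         S t s @` range (Q s) = range (Q t)),
      [/\ continuous K, (forall t, 1 <= K t), 1 <= D, 0 <= nu &
          forall t, K t <= D * expR (nu * `|t|)] &
      [/\ 0 < alpha,
          (forall t s : R, s <= t ->
             opnorm_le (fun x => S t s (x - Q s x)) (K s * expR (- alpha * (t - s)))) &
          (* for t < s, S(t,s)Q(s)x is the unique y in R(Q t) with
             S(s,t) y = Q(s) x; its norm is bounded *)
          (forall t s : R, t < s -> forall (x y : X),
             Q t y = y -> S s t y = Q s x ->
             `|y| <= K s * expR (alpha * (t - s)) * `|x|)]].

End Defs.

From HB Require Import structures.
From mathcomp Require Import all_boot all_order all_algebra.
From mathcomp Require Import all_classical all_reals all_analysis.
From mathcomp Require Import ring lra.
Import Order.TTheory GRing.Theory Num.Theory.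
Import numFieldNormedType.Exports.
Set Implicit Arguments. Unset Strict Implicit. Unset Printing Implicit Defensive.
Local Open Scope classical_set_scope.
Local Open Scope ring_scope.

(* Split QT t x - QS t x = (QT t x - QS t (QT t x)) - QS t (x - QT t x).
   Each term is bounded by eps K(t) |x| e^{-alpha} / (1 - e^{-(alpha_S+alpha_T)})
   with alpha = alpha_T resp. alpha_S:
   - stable_part_bound: the unstable S-part of the stable T-part of x.  The
     T-orbit of x - QT t x at the times t + n is lifted through S into
     R(QS t); consecutive lifts differ by the one-step defect S - T pulled
     back by S (forward_step).
   - unstable_part_bound: the stable T-part of the unstable S-part of x.
     QS t x is continued backward inside the unstable ranges of S to the
     times t - n; the stable T-parts of the continuations are pushed forward
     to time t and consecutive ones differ by the one-step defect pushed
     forward by T (backward_step).  Applied with S and T exchanged it bounds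
     the first term.
   In both cases the increments decay like e^{-(alpha_S+alpha_T) n} and the
   terms themselves like e^{(nu - alpha_S - alpha_T) n}, so the geometric
   telescoping lemma yields the bound. *)

Section RealFacts.
Variable R : realType.

Lemma le_of_geometric_slack (A C M r : R) :
  0 <= r < 1 -> (forall n, A <= C + M * r ^+ n) -> A <= C.
Proof.
move=> /andP[r0 r1] HA.
have slack_cvg : (C + M * r ^+ n) @[n --> \oo] --> C.
  rewrite -[X in _ --> X]addr0; apply: cvgD; first exact: cvg_cst.
  by apply: (cvg_geometric M); rewrite ger0_norm.
rewrite -(cvg_lim _ slack_cvg) //; apply: limr_ge; first exact: cvgP slack_cvg.
exact: nearW.
Qed.

Lemma expR_ratio (x : R) : x < 0 -> 0 <= expR x < 1.
Proof. by move=> x0; rewrite expR_ge0 expR_lt1. Qed.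

Lemma expR_gap (a h : R) (n : nat) : h = - n%:R -> expR (a * h) = expR (- a) ^+ n.
Proof. by move->; rewrite -expRM_natr mulrN mulNr. Qed.

End RealFacts.

Section GeometricTelescoping.
Variables (R : realType) (V : normedZmodType R).

Lemma telescoping_partial (a : nat -> V) (B q : R) :
  0 <= q < 1 -> (forall n, `|a n - a n.+1| <= B * q ^+ n) ->
  forall n, `|a 0| <= B / (1 - q) + `|a n|.
Proof.
move=> /andP[q0 q1] step n.
have gap_gt0 : 0 < 1 - q by rewrite subr_gt0.
have B0 : 0 <= B by have := step 0%N; rewrite expr0 mulr1; apply: le_trans.
have partial_sum : forall m, `|a 0 - a m| <= B * (1 - q ^+ m) / (1 - q).
  elim=> [|m IH]; first by rewrite subrr normr0 expr0 subrr mulr0 mul0r.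
  have -> : a 0 - a m.+1 = (a 0 - a m) + (a m - a m.+1) by rewrite addrA subrK.
  apply: (le_trans (ler_normD _ _)); apply: (le_trans (lerD IH (step m))).
  have -> : B * (1 - q ^+ m) / (1 - q) + B * q ^+ m = B * (1 - q ^+ m.+1) / (1 - q).
    by rewrite exprS; field; rewrite gt_eqF.
  by [].
have -> : a 0 = (a 0 - a n) + a n by rewrite subrK.
apply: (le_trans (ler_normD _ _)); rewrite lerD2r.
apply: (le_trans (partial_sum n)); apply: ler_wpM2r; first by rewrite invr_ge0 ltW.
by rewrite -[leRHS]mulr1 ler_wpM2l // lerBlDr lerDl exprn_ge0.
Qed.

Lemma geometric_telescoping (a : nat -> V) (B q M r : R) :
  0 <= q < 1 -> 0 <= r < 1 ->
  (forall n, `|a n - a n.+1| <= B * q ^+ n) ->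
  (forall n, `|a n.+1| <= M * r ^+ n) ->
  `|a 0| <= B / (1 - q).
Proof.
move=> q01 r01 step decay; apply: (le_of_geometric_slack (M := M) r01) => n.
by apply: le_trans (telescoping_partial q01 step n.+1) _; rewrite lerD2l.
Qed.

End GeometricTelescoping.

Section DichotomyFacts.
Variables (R : realType) (X : completeNormedModType R).
Variables (S : R -> R -> X -> X) (Q : R -> X -> X) (K : R -> R) (D nu alpha : R).
Hypotheses (lS : linear_evolution_process S)
  (dS : nonuniform_exp_dichotomy S Q K D nu alpha).

Lemma additive_sub (f : X -> X) :
  (forall (a : R) x y, f (a *: x + y) = a *: f x + f y) ->
  forall x y, f (x - y) = f x - f y.
Proof. by move=> f_lin x y; rewrite addrC -scaleN1r f_lin scaleN1r addrC. Qed.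

Lemma process_id t x : S t t x = x.
Proof. by case: lS => -[-> _ _]. Qed.

Lemma process_comp t s r x : r <= s -> s <= t -> S t s (S s r x) = S t r x.
Proof. by case: lS => -[_ comp _] _ rs st; rewrite -(comp t s r rs st). Qed.

Lemma process_sub t s x y : s <= t -> S t s (x - y) = S t s x - S t s y.
Proof. by case: lS => _ lin st; apply: additive_sub; exact: lin. Qed.

Lemma projection_sub t x y : Q t (x - y) = Q t x - Q t y.
Proof. by case: dS => proj _ _ _ _; apply: additive_sub; case: (proj t). Qed.

Lemma projection_idem t x : Q t (Q t x) = Q t x.
Proof. by case: dS => proj _ _ _ _; case: (proj t) => _ [_ ->]. Qed.

Lemma projection_comm t s x : s <= t -> Q t (S t s x) = S t s (Q s x).
Proof. by case: dS => _ comm _ _ _ st; exact: comm. Qed.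

Lemma exponent_gt0 : 0 < alpha.
Proof. by case: dS => _ _ _ _ []. Qed.

Lemma bound_gt0 t : 0 < K t.
Proof. by case: dS => _ _ _ [_ K1 _ _ _] _; exact: lt_le_trans (K1 t). Qed.

Lemma stable_estimate t s x :
  s <= t -> `|S t s (x - Q s x)| <= K s * expR (- alpha * (t - s)) * `|x|.
Proof. by case: dS => _ _ _ _ [_ st _] /st; apply. Qed.

Lemma unstable_estimate t s x y : t < s -> Q t y = y -> S s t y = Q s x ->
  `|y| <= K s * expR (alpha * (t - s)) * `|x|.
Proof. by case: dS => _ _ _ _ [_ _ un] ts; exact: un. Qed.

Lemma bound_shift t h (n : nat) :
  `|h| <= n%:R -> K (t + h) <= D * expR (nu * `|t|) * expR nu ^+ n.
Proof.
case: dS => _ _ _ [_ _ D1 nu0 KD] _ hn.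
apply: (le_trans (KD _)); rewrite -expRM_natr -mulrA -expRD ler_wpM2l //; first lra.
rewrite ler_expR -mulrDr ler_wpM2l //.
by apply: (le_trans (ler_normD _ _)); rewrite lerD2l.
Qed.

(* Composition of two exponential estimates, one taken at time t and one at
   the shifted time t + h: the nonuniform growth of K costs a factor e^{nu n}. *)
Lemma shifted_estimate t h (n : nat) (u v x : X) (a b : R) : `|h| <= n%:R ->
  `|v| <= K t * expR (- b) ^+ n * `|x| ->
  `|u| <= K (t + h) * expR (- a) ^+ n * `|v| ->
  `|u| <= D * expR (nu * `|t|) * K t * `|x| * expR (nu - (a + b)) ^+ n.
Proof.
move=> hn v_bound u_bound.
have K_bound := bound_shift t hn.
have K_bound0 := le_trans (ltW (bound_gt0 _)) K_bound.
apply: (le_trans u_bound); apply: (le_trans (ler_wpM2r (normr_ge0 _)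
  (ler_wpM2r (exprn_ge0 _ (expR_ge0 _)) K_bound))).
apply: (le_trans (ler_wpM2l _ v_bound)); first by rewrite mulr_ge0 ?exprn_ge0 ?expR_ge0.
by rewrite expRD opprD expRD !exprMn; lra.
Qed.

Lemma unstable_preimage t s w : s <= t -> exists y, Q s y = y /\ S t s y = Q t w.
Proof.
case: dS => _ _ iso _ _ /iso[_ onto].
have : range (Q t) (Q t w) by exists w.
rewrite -onto => -[_ [z _ <-] Sz]; exists (Q s z).
by rewrite projection_idem.
Qed.

Lemma unstable_continuation t s' s y y' : s <= s' -> s' <= t ->
  Q s y = y -> Q s' y' = y' -> S t s y = S t s' y' -> S s' s y = y'.
Proof.
case: dS => _ _ iso _ _ ss' s't Qy Qy' same.
have [inj _] := iso _ _ s't; apply: inj.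
- by rewrite inE; exists (S s' s y) => //; rewrite projection_comm // Qy.
- by rewrite inE; exists y'.
- by rewrite process_comp.
Qed.

End DichotomyFacts.

Section Perturbation.
Variables (R : realType) (X : completeNormedModType R).
Variables (S T : R -> R -> X -> X) (QS QT : R -> X -> X) (K : R -> R).
Variables (D nu aS aT eps : R).
Hypotheses (lS : linear_evolution_process S) (lT : linear_evolution_process T).
Hypotheses (dS : nonuniform_exp_dichotomy S QS K D nu aS)
  (dT : nonuniform_exp_dichotomy T QT K D nu aT).
Hypothesis eps_ge0 : 0 <= eps.
Hypothesis close : forall t s : R, 0 <= t - s <= 1 ->
  opnorm_le (fun x => S t s x - T t s x) (eps / K t).

(* One step of length at most 1 of the two processes, seen through the
   unstable projection of S: pulling the defect back to time t costs the
   factor eps e^{alpha_S (t - s')}. *)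
Lemma forward_step t s s' (w c c' : X) : t <= s -> s < s' <= s + 1 ->
  QS t c = c -> QS t c' = c' ->
  S s t c = QS s w -> S s' t c' = QS s' (T s' s w) ->
  `|c - c'| <= eps * expR (aS * (t - s')) * `|w|.
Proof.
move=> ts /andP[ss' s's1] Qc Qc' Sc Sc'.
have ss'_le := ltW ss'; have ts' : t < s' by exact: le_lt_trans ss'.
set d := S s' s w - T s' s w.
have in_range : QS t (c - c') = c - c' by rewrite (projection_sub dS) Qc Qc'.
have image : S s' t (c - c') = QS s' d.
  rewrite (process_sub lS _ _ (ltW ts')) Sc' /d (projection_sub dS).
  by rewrite -(process_comp lS _ ts ss'_le) Sc (projection_comm dS).
have d_small : `|d| <= eps / K s' * `|w| by apply: close; lra.
apply: (le_trans (unstable_estimate dS ts' in_range image)).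
have Kexp0 : 0 <= K s' * expR (aS * (t - s')).
  by rewrite mulr_ge0 ?expR_ge0 ?ltW ?(bound_gt0 dS).
apply: (le_trans (ler_wpM2l Kexp0 d_small)).
by rewrite le_eqVlt; apply/orP; left; apply/eqP; field; rewrite gt_eqF ?(bound_gt0 dS).
Qed.

(* The stable T-part of x has a small unstable S-part: follow the T-orbit of
   x - QT t x forward along integer times, lift each point of it to R(QS t)
   through S, and telescope the lifts with forward_step. *)
Lemma stable_part_bound t x :
  nu < aS + aT ->
  `|QS t (x - QT t x)| <=
    eps * K t * `|x| * expR (- aS) / (1 - expR (- (aS + aT))).
Proof.
move=> rate.
have [aS0 aT0] := (exponent_gt0 dS, exponent_gt0 dT).
pose w n := T (t + n%:R) t (x - QT t x).
have t_le n : t <= t + n%:R by rewrite lerDl.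
have t_step n : t + n%:R < t + n.+1%:R <= t + n%:R + 1 by rewrite mulrS; lra.
have [c lift] := choice (fun n => unstable_preimage dS (w n) (t_le n)).
have c0 : c 0%N = QS t (x - QT t x).
  by have [_] := lift 0%N; rewrite /w mulr0n addr0 !(process_id lS, process_id lT).
have w_bound n : `|w n| <= K t * expR (- aT) ^+ n * `|x|.
  have := stable_estimate dT x (t_le n).
  by rewrite mulNr -mulrN (@expR_gap _ aT _ n) //; ring.
have step n : `|c n - c n.+1| <=
    eps * K t * `|x| * expR (- aS) * expR (- (aS + aT)) ^+ n.
  have next : S (t + n.+1%:R) t (c n.+1) =
      QS (t + n.+1%:R) (T (t + n.+1%:R) (t + n%:R) (w n)).
    have [/ltW tn _] := andP (t_step n).
    by rewrite (lift n.+1).2 /w (process_comp lT) // t_le.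
  apply: (le_trans (forward_step (t_le n) (t_step n) (lift n).1 (lift n.+1).1
    (lift n).2 next)).
  rewrite (@expR_gap _ aS _ n.+1); last by ring.
  apply: (le_trans (ler_wpM2l _ (w_bound n))); first by rewrite mulr_ge0 ?expR_ge0.
  by rewrite exprS opprD expRD exprMn; lra.
have decay n : `|c n.+1| <=
    D * expR (nu * `|t|) * K t * `|x| * expR (nu - (aS + aT)) ^+ n.+1.
  have t_lt : t < t + n.+1%:R by rewrite ltrDl ltr0Sn.
  have := unstable_estimate dS t_lt (lift n.+1).1 (lift n.+1).2.
  rewrite (@expR_gap _ aS _ n.+1); last by ring.
  by apply: (shifted_estimate dS _ (w_bound n.+1)); rewrite normr_nat.
rewrite -c0; apply: (geometric_telescoping _ _ step (r := expR (nu - (aS + aT)))).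
- by apply: expR_ratio; lra.
- by apply: expR_ratio; lra.
- by move=> n; apply: (le_trans (decay n)); rewrite exprS mulrA.
Qed.

(* One step of length at most 1 of the two processes, seen through the
   stable projection of T: pushing the defect forward to time t costs the
   factor eps e^{-alpha_T (t - s')}. *)
Lemma backward_step t s s' (z : X) : s <= s' <= s + 1 -> s' <= t ->
  `|T t s' (S s' s z - QT s' (S s' s z)) - T t s (z - QT s z)| <=
    eps * expR (- aT * (t - s')) * `|z|.
Proof.
move=> /andP[ss' s's1] s't.
set v := S s' s z - T s' s z.
have defect : T t s' (S s' s z - QT s' (S s' s z)) - T t s (z - QT s z) =
    T t s' (v - QT s' v).
  rewrite -(process_comp lT _ ss' s't) -(process_sub lT _ _ s't); congr (T t s' _).
  rewrite (process_sub lT _ _ ss') -(projection_comm dT _ ss') /v (projection_sub dT).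
  by rewrite !opprD addrACA.
have v_small : `|v| <= eps / K s' * `|z| by apply: close; lra.
rewrite defect; apply: (le_trans (stable_estimate dT v s't)).
have Kexp0 : 0 <= K s' * expR (- aT * (t - s')).
  by rewrite mulr_ge0 ?expR_ge0 ?ltW ?(bound_gt0 dS).
apply: (le_trans (ler_wpM2l Kexp0 v_small)).
by rewrite le_eqVlt; apply/orP; left; apply/eqP; field; rewrite gt_eqF ?(bound_gt0 dS).
Qed.

(* The unstable S-part u = QS t x has a small stable T-part: continue u
   backward inside the unstable ranges of S along integer times, push the
   stable T-parts of the continuations forward to time t with T, and
   telescope them with backward_step. *)
Lemma unstable_part_bound t x :
  nu < aS + aT ->
  `|QS t x - QT t (QS t x)| <=
    eps * K t * `|x| * expR (- aS) / (1 - expR (- (aS + aT))).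
Proof.
move=> rate.
have [aS0 aT0] := (exponent_gt0 dS, exponent_gt0 dT).
have le_t k : t - k%:R <= t by rewrite lerBlDr lerDl.
have t_step k : t - k.+1%:R <= t - k%:R <= t - k.+1%:R + 1 by rewrite mulrS; lra.
have [z lift] := choice (fun k => unstable_preimage dS x (le_t k)).
have orbit k : S (t - k%:R) (t - k.+1%:R) (z k.+1) = z k.
  have [le_k _] := andP (t_step k).
  apply: (unstable_continuation lS dS le_k (le_t k) (lift k.+1).1 (lift k).1).
  by rewrite (lift k.+1).2 (lift k).2.
have z0 : z 0%N = QS t x by have [_] := lift 0%N; rewrite mulr0n subr0 (process_id lS).
have z_bound k : `|z k.+1| <= K t * expR (- aS) ^+ k.+1 * `|x|.
  have t_lt : t - k.+1%:R < t by rewrite ltrBlDr ltrDl ltr0Sn.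
  have := unstable_estimate dS t_lt (lift k.+1).1 (lift k.+1).2.
  by rewrite (@expR_gap _ aS _ k.+1) //; ring.
pose a k := T t (t - k%:R) (z k - QT (t - k%:R) (z k)).
have a0 : a 0%N = QS t x - QT t (QS t x).
  by rewrite /a mulr0n subr0 (process_id lT) z0.
have step k : `|a k - a k.+1| <=
    eps * K t * `|x| * expR (- aS) * expR (- (aS + aT)) ^+ k.
  have := backward_step (z k.+1) (t_step k) (le_t k); rewrite orbit.
  rewrite mulNr -mulrN (@expR_gap _ aT _ k); last by ring.
  move/le_trans; apply; apply: (le_trans (ler_wpM2l _ (z_bound k))).
    by rewrite mulr_ge0 ?expR_ge0.
  by rewrite exprS opprD expRD exprMn; lra.
have decay k : `|a k.+1| <=
    D * expR (nu * `|t|) * K t * `|x| * expR (nu - (aS + aT)) ^+ k.+1.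
  have := stable_estimate dT (z k.+1) (le_t k.+1).
  rewrite mulNr -mulrN (@expR_gap _ aT _ k.+1); last by ring.
  rewrite (addrC aS); apply: (shifted_estimate dS _ (z_bound k)).
  by rewrite normrN normr_nat.
rewrite -a0; apply: (geometric_telescoping _ _ step (r := expR (nu - (aS + aT)))).
- by apply: expR_ratio; lra.
- by apply: expR_ratio; lra.
- by move=> n; apply: (le_trans (decay n)); rewrite exprS mulrA.
Qed.

End Perturbation.

(* The defect hypothesis at s = t forces eps >= 0, unless X is trivial. *)
Lemma defect_nonneg_or_trivial (R : realType) (X : completeNormedModType R)
    (S T : R -> R -> X -> X) (K : R -> R) (eps : R) :
  linear_evolution_process S -> linear_evolution_process T ->
  (forall t, 0 < K t) ->
  (forall t s : R, 0 <= t - s <= 1 ->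
     opnorm_le (fun x => T t s x - S t s x) (eps / K t)) ->
  0 <= eps \/ forall y : X, y = 0.
Proof.
move=> lS lT K_gt0 close; have [eps0 | eps_lt0] := leP 0 eps; [by left | right].
move=> y; apply/normr0_eq0/eqP; rewrite eq_le normr_ge0 andbT.
have := close 0 0 _ y; rewrite subrr lexx ler01 (process_id lS) (process_id lT).
rewrite subrr normr0 => /(_ isT) defect_ge0; rewrite leNgt; apply/negP => y_pos.
have : eps / K 0 * `|y| < 0 by rewrite pmulr_llt0 // pmulr_llt0 // invr_gt0.
by rewrite ltNge defect_ge0.
Qed.

Theorem mainTheorem5 (R : realType) (X : completeNormedModType R)
    (S T : R -> R -> X -> X) (QS QT : R -> X -> X) (K : R -> R)
    (D nu alphaS alphaT eps : R) :
  linear_evolution_process S ->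
  linear_evolution_process T ->
  nonuniform_exp_dichotomy S QS K D nu alphaS ->
  nonuniform_exp_dichotomy T QT K D nu alphaT ->
  nu < Num.min alphaT alphaS ->
  (forall t s : R, 0 <= t - s <= 1 ->
     opnorm_le (fun x => T t s x - S t s x) (eps / K t)) ->
  forall t : R,
    opnorm_le (fun x => QT t x - QS t x)
      (K t * ((expR (- alphaS) + expR (- alphaT)) /
              (1 - expR (- (alphaS + alphaT))) * eps)).
Proof.
move=> lS lT dS dT nu_min close t x.
have [aS0 aT0] := (exponent_gt0 dS, exponent_gt0 dT).
have rate : nu < alphaS + alphaT by move: nu_min; rewrite lt_min => /andP[]; lra.
have [eps0 | trivial] := defect_nonneg_or_trivial lS lT (bound_gt0 dS) close; last first.
  by rewrite (trivial (_ - _)) (trivial x) !normr0 mulr0.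
have close_sym t' s' : 0 <= t' - s' <= 1 ->
    opnorm_le (fun y => S t' s' y - T t' s' y) (eps / K t').
  by move=> ts y; rewrite distrC; exact: close.
have -> : QT t x - QS t x = (QT t x - QS t (QT t x)) - QS t (x - QT t x).
  by rewrite (projection_sub dS) opprB addrA subrK.
apply: (le_trans (ler_normB _ _)).
have rateTS : nu < alphaT + alphaS by rewrite addrC.
have unstable := unstable_part_bound lT lS dT dS eps0 close t x rateTS.
have stable := stable_part_bound lS lT dS dT eps0 close_sym t x rate.
apply: (le_trans (lerD unstable stable)); rewrite (addrC alphaT).
have q_lt1 : expR (- (alphaS + alphaT)) < 1 by rewrite expR_lt1; lra.
by rewrite le_eqVlt; apply/orP; left; apply/eqP; field; rewrite subr_eq0 eq_sym lt_eqF.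
Qed.
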